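(* Let spacetime be covered by global coordinates $(x^\mu)=(x^0,x^i)$ with $x^0=ct$, equipped with a physical metric $g_{\mu\nu}$ of signature $(+,-,-,-)$ with $g_{00}>0$ everywhere, and let an arbitrarily moving, linear, isotropic, nondispersive fluid dielectric medium with index of refraction $n(x)$ and unit 4-velocity $w^\mu(x)$ (i.e. $g_{\mu\nu}w^\mu w^\nu=1$) be present. Let $\bar g^{\mu\nu}=g^{\mu\nu}+(n^2-1)w^\mu w^\nu$ be the contravariant components of Gordon's optical metric. Consider, within the geometrical optics approximation, a light ray emitted at $x_A=(x_A^0,\mathbf x_A)$ and received at $x_B=(x_B^0,\mathbf x_B)$, with wave covector $k_\mu=\partial_\mu\mathscr S$, where the eikonal $\mathscr S$ satisfies $\bar g^{\mu\nu}\partial_\mu\mathscr S\,\partial_\nu\mathscr S=0$. Let $\mathcal R_r(\mathbf x_A,x_B)=c(t_B-t_A)$ and $\mathcal R_e(x_A,\mathbf x_B)=c(t_B-t_A)$ be the reception and emission range transfer functions, which satisfy $(k_i/k_0)_A=\partial\mathcal R_r/\partial x_A^i$ and $(k_i/k_0)_B=-\partial\mathcal R_e/\partial x_B^i$. Then $$\bar g^{00}(x_B^0-\mathcal R_r,\mathbf x_A)+2\bar g^{0i}(x_B^0-\mathcal R_r,\mathbf x_A)\frac{\partial\mathcal R_r}{\partial x_A^i}+\bar g^{ij}(x_B^0-\mathcal R_r,\mathbf x_A)\frac{\partial\mathcal R_r}{\partial x_A^i}\frac{\partial\mathcal R_r}{\partial x_A^j}=0,$$ and $$\bar g^{00}(x_A^0+\mathcal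 R_e,\mathbf x_B)-2\bar g^{0i}(x_A^0+\mathcal R_e,\mathbf x_B)\frac{\partial\mathcal R_e}{\partial x_B^i}+\bar g^{ij}(x_A^0+\mathcal R_e,\mathbf x_B)\frac{\partial\mathcal R_e}{\partial x_B^i}\frac{\partial\mathcal R_e}{\partial x_B^j}=0.$$
   Context: Summation over repeated indices is used; Greek indices run over $0,\dots,3$, Latin over $1,2,3$. The light ray is assumed quasi-Minkowskian: for each spatial position $\mathbf x_A$, the past null cone (of the optical metric) at $x_B$ intersects the timelike worldline $\mathbf x=\mathbf x_A$ at exactly one point $x_A=(ct_A,\mathbf x_A)$, so that the reception time transfer function $\mathcal T_r(\mathbf x_A,t_B,\mathbf x_B)=t_B-t_A$ and emission time transfer function $\mathcal T_e(t_A,\mathbf x_A,\mathbf x_B)=t_B-t_A$ are uniquely defined; $\mathcal R_r=c\mathcal T_r$, $\mathcal R_e=c\mathcal T_e$. The notation $\bar g^{\mu\nu}(y^0,\mathbf y)$ means the component evaluated at the point event with coordinates $(y^0,\mathbf y)$. *)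

From HB Require Import structures.
From mathcomp Require Import all_boot all_order all_algebra.
From mathcomp Require Import all_classical all_reals all_analysis.
Set Implicit Arguments. Unset Strict Implicit. Unset Printing Implicit Defensive.
Import Order.TTheory GRing.Theory Num.Theory.
Import numFieldNormedType.Exports.
Local Open Scope ring_scope.

(* Spacetime indices: 'I_4, with ord0 = time index 0 and
   sidx i = spatial index i+1 for i : 'I_3. *)
Definition sidx (i : 'I_3) : 'I_4 := lift ord0 i.

Definition unit3 {R : realType} (i : 'I_3) : 'rV[R]_3 := delta_mx 0 i.

Definition dsp {R : realType} (f : 'rV[R]_3 -> R) (x : 'rV[R]_3) (i : 'I_3) : R :=
  'D_(unit3 i) f x.

Definition dtime {R : realType} (f : R -> R) (t : R) : R := 'D_1 f t.

Definition wavecov {R : realType} (S : R -> 'rV[R]_3 -> R) (x0 : R) (x : 'rV[R]_3)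
  (m : 'I_4) : R :=
  match unlift ord0 m with
  | None => dtime (fun s => S s x) x0
  | Some i => dsp (S x0) x i
  end.

Definition gordon {R : realType} (gcon : R -> 'rV[R]_3 -> 'M[R]_4)
  (n : R -> 'rV[R]_3 -> R) (w : R -> 'rV[R]_3 -> 'rV[R]_4)
  (x0 : R) (x : 'rV[R]_3) : 'M[R]_4 :=
  \matrix_(a, b) (gcon x0 x a b + (n x0 x ^+ 2 - 1) * w x0 x 0 a * w x0 x 0 b).

Definition qform {R : realType} (M : 'M[R]_4) (k : 'I_4 -> R) : R :=
  \sum_(a < 4) \sum_(b < 4) M a b * k a * k b.

Definition minkowski {R : realType} : 'M[R]_4 :=
  diag_mx (\row_(a < 4) (if a == ord0 then 1 else -1 : R)).
Definition lorentzian {R : realType} (G : 'M[R]_4) : Prop :=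
  exists P : 'M[R]_4, P \in unitmx /\ P^T *m G *m P = minkowski.

From HB Require Import structures.
From mathcomp Require Import all_boot all_order all_algebra.
From mathcomp Require Import all_classical all_reals all_analysis.
From mathcomp Require Import ring.
Import Order.TTheory GRing.Theory Num.Theory.
Import numFieldNormedType.Exports.
Local Open Scope classical_set_scope.
Local Open Scope ring_scope.

(* The eikonal equation says that the wave covector k is a null vector of the
   quadratic form of the optical metric.  That form is homogeneous of degree 2,
   so dividing by k_0^2 (nonzero) gives the same equation in the ratios
   k_i / k_0, which are the spatial gradients of the range transfer functions
   (with a minus sign at reception point B for the emission function).  The
   only property of the metric that is needed is the symmetry of the optical
   metric, inherited from that of g_{mu nu} through g^{mu nu} = g_{mu nu}^-1. *)

Lemma trmx_rinv_sym {R : comUnitRingType} {m : nat} (A B : 'M[R]_m) :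
  A *m B = 1%:M -> A^T = A -> B^T = B.
Proof.
move=> AB1 symA; have [Aunit _] := mulmx1_unit AB1.
have -> : B = invmx A by rewrite -[LHS](mulKmx Aunit) AB1 mulmx1.
by rewrite trmx_inv symA.
Qed.

Lemma gordon_sym {R : realType} (gcon : R -> 'rV[R]_3 -> 'M[R]_4)
  (n : R -> 'rV[R]_3 -> R) (w : R -> 'rV[R]_3 -> 'rV[R]_4) (x0 : R) (x : 'rV[R]_3) :
  (gcon x0 x)^T = gcon x0 x -> (gordon gcon n w x0 x)^T = gordon gcon n w x0 x.
Proof.
move=> symg; apply/matrixP => a b; rewrite !mxE.
by rewrite -{1}symg mxE mulrAC.
Qed.

(* [qform M] at the covector [(1, d)]. *)
Definition qform_dehom {R : realType} (M : 'M[R]_4) (d : 'I_3 -> R) : R :=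
  M ord0 ord0 + 2 * (\sum_(i < 3) M ord0 (sidx i) * d i)
  + \sum_(i < 3) \sum_(j < 3) M (sidx i) (sidx j) * d i * d j.

Lemma qform_split {R : realType} (M : 'M[R]_4) (k : 'I_4 -> R) : M^T = M ->
  qform M k = M ord0 ord0 * k ord0 ^+ 2
    + 2 * k ord0 * (\sum_(i < 3) M ord0 (sidx i) * k (sidx i))
    + \sum_(i < 3) \sum_(j < 3) M (sidx i) (sidx j) * k (sidx i) * k (sidx j).
Proof.
move=> symM; have symM_i0 i : M (sidx i) ord0 = M ord0 (sidx i).
  by rewrite -{1}symM mxE.
rewrite /qform; under eq_bigr => a _ do rewrite big_ord_recl.
rewrite big_ord_recl big_split /= -/sidx.
under eq_bigr => i _ do rewrite mulrAC.
under [X in _ + (X + _)]eq_bigr => i _ do rewrite symM_i0.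
rewrite -mulr_suml; ring.
Qed.

Lemma qform_dehomE {R : realType} (M : 'M[R]_4) (k : 'I_4 -> R) :
  M^T = M -> k ord0 != 0 ->
  qform M k = k ord0 ^+ 2 * qform_dehom M (fun i => k (sidx i) / k ord0).
Proof.
move=> symM k0_neq0; rewrite qform_split // /qform_dehom.
have pull1 : \sum_(i < 3) M ord0 (sidx i) * (k (sidx i) / k ord0)
    = (\sum_(i < 3) M ord0 (sidx i) * k (sidx i)) / k ord0.
  by rewrite mulr_suml; apply: eq_bigr => i _; rewrite mulrA.
have pull2 : \sum_(i < 3) \sum_(j < 3)
      M (sidx i) (sidx j) * (k (sidx i) / k ord0) * (k (sidx j) / k ord0)
    = (\sum_(i < 3) \sum_(j < 3) M (sidx i) (sidx j) * k (sidx i) * k (sidx j))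
      / k ord0 ^+ 2.
  rewrite mulr_suml; apply: eq_bigr => i _; rewrite mulr_suml.
  by apply: eq_bigr => j _; field.
by rewrite pull1 pull2; field.
Qed.

Lemma qform_dehom_opp {R : realType} (M : 'M[R]_4) (d : 'I_3 -> R) :
  qform_dehom M (fun i => - d i) =
  M ord0 ord0 - 2 * (\sum_(i < 3) M ord0 (sidx i) * d i)
  + \sum_(i < 3) \sum_(j < 3) M (sidx i) (sidx j) * d i * d j.
Proof.
rewrite /qform_dehom; congr (_ + _ + _).
  by rewrite -mulrN -sumrN; congr (_ * _); apply: eq_bigr => i _; rewrite mulrN.
by apply: eq_bigr => i _; apply: eq_bigr => j _; rewrite !(mulrN, mulNr) opprK.
Qed.

Lemma qform_dehom_null {R : realType} (M : 'M[R]_4) (k : 'I_4 -> R) :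
  M^T = M -> k ord0 != 0 -> qform M k = 0 ->
  qform_dehom M (fun i => k (sidx i) / k ord0) = 0.
Proof.
move=> symM k0_neq0; rewrite qform_dehomE // => /eqP.
by rewrite mulf_eq0 expf_eq0 /= (negbTE k0_neq0) => /eqP.
Qed.

Theorem theorem1 (R : realType)
  (* physical metric: covariant g_{mu nu} and contravariant g^{mu nu} *)
  (gcov gcon : R -> 'rV[R]_3 -> 'M[R]_4)
  (* index of refraction and unit 4-velocity (contravariant) of the medium *)
  (n : R -> 'rV[R]_3 -> R) (w : R -> 'rV[R]_3 -> 'rV[R]_4)
  (* eikonal, defined on an open region U of spacetime *)
  (S : R -> 'rV[R]_3 -> R) (U : set (R * 'rV[R]_3))
  (* reception / emission range transfer functions *)
  (Rr : 'rV[R]_3 -> R -> 'rV[R]_3 -> R) (Re : R -> 'rV[R]_3 -> 'rV[R]_3 -> R)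
  (* emission and reception events *)
  (xA0 : R) (xA : 'rV[R]_3) (xB0 : R) (xB : 'rV[R]_3) :
  (forall x0 x, gcov x0 x *m gcon x0 x = 1) ->
  (forall x0 x, (gcov x0 x)^T = gcov x0 x) ->
  (forall x0 x, lorentzian (gcov x0 x)) ->
  (forall x0 x, 0 < gcov x0 x ord0 ord0) ->
  (forall x0 x, \sum_(a < 4) \sum_(b < 4)
                  gcov x0 x a b * w x0 x 0 a * w x0 x 0 b = 1) ->
  open U -> U (xA0, xA) -> U (xB0, xB) ->
  (forall x0 x, U (x0, x) -> qform (gordon gcon n w x0 x) (wavecov S x0 x) = 0) ->
  xA0 = xB0 - Rr xA xB0 xB ->
  xB0 = xA0 + Re xA0 xA xB ->
  wavecov S xA0 xA ord0 != 0 ->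
  wavecov S xB0 xB ord0 != 0 ->
  (forall i : 'I_3, wavecov S xA0 xA (sidx i) / wavecov S xA0 xA ord0
                    = dsp (fun y => Rr y xB0 xB) xA i) ->
  (forall i : 'I_3, wavecov S xB0 xB (sidx i) / wavecov S xB0 xB ord0
                    = - dsp (fun y => Re xA0 xA y) xB i) ->
  (let G := gordon gcon n w (xB0 - Rr xA xB0 xB) xA in
   let d := dsp (fun y => Rr y xB0 xB) xA in
   G ord0 ord0 + 2 * (\sum_(i < 3) G ord0 (sidx i) * d i)
   + \sum_(i < 3) \sum_(j < 3) G (sidx i) (sidx j) * d i * d j = 0)
  /\
  (let G := gordon gcon n w (xA0 + Re xA0 xA xB) xB in
   let d := dsp (fun y => Re xA0 xA y) xB in
   G ord0 ord0 - 2 * (\sum_(i < 3) G ord0 (sidx i) * d i)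
   + \sum_(i < 3) \sum_(j < 3) G (sidx i) (sidx j) * d i * d j = 0).
Proof.
move=> gcov_gcon sym_gcov _ _ _ _ UA UB eikonal tA tB kA0 kB0 ratioA ratioB.
have symG x0 x : (gordon gcon n w x0 x)^T = gordon gcon n w x0 x.
  by apply: gordon_sym; apply: trmx_rinv_sym (gcov_gcon x0 x) (sym_gcov x0 x).
split=> /=.
- rewrite -tA -/(qform_dehom _ _) -(funext ratioA).
  exact: qform_dehom_null (symG _ _) kA0 (eikonal _ _ UA).
- rewrite -tB -qform_dehom_opp.
  have -> : (fun i => - dsp (fun y => Re xA0 xA y) xB i) =
            (fun i => wavecov S xB0 xB (sidx i) / wavecov S xB0 xB ord0).
    by apply/funext => i; rewrite ratioB.
  exact: qform_dehom_null (symG _ _) kB0 (eikonal _ _ UB).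
Qed.
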